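(* Let $A=[1,1,\dots,1]\in\mathbb R^{1\times N}$, $\vec w\in\mathbb R^N$ with $\sum_{i=1}^N w_i>0$, $b=A\vec w$, and let $\vec x$ be the minimizer of $\frac12\|\vec x-\vec w\|_2^2$ over $\vec x\in\mathbb R^N$ subject to $A\vec x=b$ and $x_i\ge0$ for all $i$. Assume at least one entry of $\vec w$ is strictly less than $0$. Then for every index $i$ with $w_i\le0$ we have $x_i=0$. *)

From HB Require Import structures.
From mathcomp Require Import all_boot all_order all_algebra.
From mathcomp Require Import reals.
Set Implicit Arguments. Unset Strict Implicit. Unset Printing Implicit Defensive.
Import Order.TTheory GRing.Theory Num.Theory.
Local Open Scope ring_scope.

Definition onesA (R : realType) (N : nat) : 'M[R]_(1, N) := const_mx 1.

Definition proj_obj (R : realType) (N : nat) (x w : 'cV[R]_N) : R :=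
  2^-1 * \sum_(i < N) (x i 0 - w i 0) ^+ 2.

Definition feasible (R : realType) (N : nat) (b : 'M[R]_1) (x : 'cV[R]_N) : Prop :=
  onesA R N *m x = b /\ forall i : 'I_N, 0 <= x i 0.

Definition is_minimizer (R : realType) (N : nat) (w : 'cV[R]_N) (b : 'M[R]_1)
  (x : 'cV[R]_N) : Prop :=
  feasible b x /\ forall y : 'cV[R]_N, feasible b y -> proj_obj x w <= proj_obj y w.

(** Moving the whole mass of a coordinate [i] onto a coordinate [k] keeps the
    point feasible and changes the objective by [x_i (w_i + x_k - w_k)].
    Since [sum x = sum w] and some [w_j < 0 <= x_j], there is a [k] with
    [x_k < w_k]; if moreover [w_i <= 0] and [x_i > 0], this change is
    negative, contradicting minimality. *)
From HB Require Import structures.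
From mathcomp Require Import all_boot all_order all_algebra.
From mathcomp Require Import reals.
From mathcomp Require Import ring lra.
Set Implicit Arguments. Unset Strict Implicit. Unset Printing Implicit Defensive.
Import Order.TTheory GRing.Theory Num.Theory.
Local Open Scope ring_scope.

Lemma sumrB_differ_at2 (V : zmodType) (I : finType) (f g : I -> V) (i k : I) :
  i != k -> (forall l, l != i -> l != k -> f l = g l) ->
  \sum_l f l - \sum_l g l = (f i - g i) + (f k - g k).
Proof.
move=> neq_ik fg; rewrite -sumrB (bigD1 i) //= (bigD1 k) 1?eq_sym //= addrA.
rewrite big1 ?addr0 // => l /andP[neq_li neq_lk].
by rewrite fg ?subrr.
Qed.

Lemma exists_ltr_of_sumr_eq (R : realDomainType) (I : finType) (f g : I -> R)
    (j : I) :
  \sum_l f l = \sum_l g l -> g j < f j -> exists k, f k < g k.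
Proof.
move=> sum_fg lt_gj.
have [k lt_fgk | ge_fg] := pickP (fun k => f k < g k); first by exists k.
have /eqP : f j - g j = 0.
  apply: (@psumr_eq0P R I predT (fun l => f l - g l)) => // [l _|].
    by rewrite subr_ge0 leNgt ge_fg.
  by rewrite sumrB sum_fg subrr.
by rewrite subr_eq0 gt_eqF.
Qed.

Section ShiftMass.

Variables (R : realType) (N : nat).

Lemma onesA_mulE (v : 'cV[R]_N) : (onesA R N *m v) 0 0 = \sum_l v l 0.
Proof. by rewrite mxE; apply: eq_bigr => l _; rewrite mxE mul1r. Qed.

Lemma onesA_mul_eq (u v : 'cV[R]_N) :
  (onesA R N *m u = onesA R N *m v) <-> \sum_l u l 0 = \sum_l v l 0.
Proof.
rewrite -!onesA_mulE; split=> [-> // | uv].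
by apply/matrixP => a b; rewrite !ord1.
Qed.

Definition shift_mass (x : 'cV[R]_N) (i k : 'I_N) : 'cV[R]_N :=
  \col_l (if l == i then 0 else if l == k then x k 0 + x i 0 else x l 0).

Variables (x : 'cV[R]_N) (i k : 'I_N).
Hypothesis neq_ik : i != k.

Lemma shift_massE_at_i : shift_mass x i k i 0 = 0.
Proof. by rewrite mxE eqxx. Qed.

Lemma shift_massE_at_k : shift_mass x i k k 0 = x k 0 + x i 0.
Proof. by rewrite mxE eq_sym (negbTE neq_ik) eqxx. Qed.

Lemma shift_massE_off l : l != i -> l != k -> shift_mass x i k l 0 = x l 0.
Proof. by move=> /negbTE neq_li /negbTE neq_lk; rewrite mxE neq_li neq_lk. Qed.

Lemma shift_mass_feasible (b : 'M[R]_1) :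
  feasible b x -> feasible b (shift_mass x i k).
Proof.
case=> xA x_ge0; split=> [|l].
  rewrite -xA; apply/onesA_mul_eq/eqP; rewrite -subr_eq0.
  rewrite (sumrB_differ_at2 (f := fun l => shift_mass x i k l 0)
                            (g := fun l => x l 0) neq_ik).
    by rewrite shift_massE_at_i shift_massE_at_k; apply/eqP; ring.
  exact: shift_massE_off.
rewrite mxE; case: ifP => // _; case: ifP => // _.
exact: addr_ge0.
Qed.

Lemma proj_obj_shift_mass (w : 'cV[R]_N) :
  proj_obj (shift_mass x i k) w - proj_obj x w =
  x i 0 * (w i 0 + x k 0 - w k 0).
Proof.
rewrite /proj_obj -mulrBr.
rewrite (sumrB_differ_at2 (f := fun l => (shift_mass x i k l 0 - w l 0) ^+ 2)
                          (g := fun l => (x l 0 - w l 0) ^+ 2) neq_ik).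
  by rewrite shift_massE_at_i shift_massE_at_k; field.
by move=> l neq_li neq_lk; rewrite shift_massE_off.
Qed.

End ShiftMass.

Theorem lemma2 (R : realType) (N : nat) (w x : 'cV[R]_N)
  (hsum : 0 < \sum_(i < N) w i 0)
  (hmin : is_minimizer w (onesA R N *m w) x)
  (hneg : exists i : 'I_N, w i 0 < 0) :
  forall i : 'I_N, w i 0 <= 0 -> x i 0 = 0.
Proof.
(* [hsum] only makes the feasible set nonempty, which [hmin] already implies. *)
move=> i wi_le0; case: hmin => [[xA x_ge0] x_min].
have sum_xw : \sum_l x l 0 = \sum_l w l 0 by apply/onesA_mul_eq.
have [j wj_lt0] := hneg.
have [k xk_lt_wk] := exists_ltr_of_sumr_eq sum_xw (lt_le_trans wj_lt0 (x_ge0 j)).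
have neq_ik : i != k.
  by apply: contraTneq xk_lt_wk => <-; rewrite -leNgt (le_trans wi_le0).
have := x_min _ (shift_mass_feasible neq_ik (conj xA x_ge0)).
rewrite -subr_ge0 proj_obj_shift_mass //.
have := x_ge0 i; nra.
Qed.
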